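(* For the $n$-dimensional rigid body with a flat face rubber-rolling on a sphere (as in the context), with $n\ge3$, the gyroscopic coefficients in the coordinates $(s_1,\dots,s_{n-1})$ on $S=\mathbb R^{n-1}$ are: (C1) if $\mathbb J=\mathrm{diag}(J_1,J_2,\dots,J_n)$ and $a=0$, then $C_{ij}^k=0$ for all $i,j,k\in\{1,\dots,n-1\}$; (C2) if $\mathbb J=\mathrm{diag}(J_1,\dots,J_1,J_n)$, then $$C_{ij}^k=\frac{-ma}{R(J_1+J_n+ma^2)}\big(s_i\delta_j^k-s_j\delta_i^k\big),\qquad 1\le i,j,k\le n-1.$$
   Context: Fix $n\ge3$, $R>0$, $a\in\mathbb R$, $m>0$ and a symmetric positive definite $n\times n$ matrix $\mathbb J$ (mass tensor). Let $E_1,\dots,E_n$ be the standard basis of $\mathbb R^n$ and, for $u,v\in\mathbb R^n$, $u\wedge v=uv^T-vu^T\in\mathfrak{so}(n)$. The configuration space is $Q=\mathbb R^{n-1}\times SO(n)$ with points $((X_1,\dots,X_{n-1}),g)$; set $X=(X_1,\dots,X_{n-1},R+a)^T\in\mathbb R^n$ (so $\dot X_n=0$) and $\Omega=g^{-1}\dot g\in\mathfrak{so}(n)$. The Lagrangian is $L=\frac12(\mathbb I\Omega,\Omega)_\kappa+\frac m2\|\dot X+\Omega X\|^2$, where $\mathbb I(\Omega)=\mathbb J\Omega+\Omega\mathbb J$, $(\xi,\eta)_\kappa=-\frac12\mathrm{tr}(\xi\eta)$ and $\|\cdot\|$ is the Euclidean norm; this defines the kinetic energy metric $\langle\cdot,\cdot\rangle$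 on $Q$ (no potential). The constraints are the rolling constraint $\dot X=-R\,\Omega E_n$ and the no-spin constraint $\Omega_{\mu\nu}=0$ for $1\le\mu,\nu\le n-1$; together they are equivalent to $\Omega=-\frac1R\dot X\wedge E_n$ with $\dot X\in\mathbb R^{n-1}\times\{0\}$, and define the distribution $\mathcal D\subset TQ$. $SO(n)$ acts on $Q$ by $h\cdot(X,g)=(X,hg)$, making this an $SO(n)$-Chaplygin system (free proper isometric action, $\mathcal D$ invariant, $T_qQ=\mathcal D_q\oplus\mathfrak{so}(n)\cdot q$) with shape space $S=\mathbb R^{n-1}$ and global coordinates $s_i=X_i$, $i=1,\dots,n-1$. The horizontal lift $\mathrm{hor}_q(\partial_{s_i})$ is the vector in $\mathcal D_q$ projecting to $\partial_{s_i}$; with $K_{kl}=\langle\mathrm{hor}_q\partial_{s_k},\mathrm{hor}_q\partial_{s_l}\rangle$ and inverse $K^{kl}$, the gyroscopic coefficients are $C_{ij}^k=\sum_lK^{kl}\langle[\mathrm{hor}_q\partial_{s_i},\mathrm{hor}_q\partial_{s_j}],\mathrm{hor}_q\partial_{s_l}\rangle_q$ (Lie bracket of vector fields on $Q$). *)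

From Stdlib Require Import Reals Arith.
Open Scope R_scope.

(* Vectors and matrices are represented as functions on indices (0-based);
   only indices below the relevant dimension are ever read. *)
Definition vec := nat -> R.
Definition mat := nat -> nat -> R.

Fixpoint rsum (N : nat) (f : nat -> R) : R :=
  match N with O => 0 | S k => rsum k f + f k end.

Definition kron (i j : nat) : R := if Nat.eqb i j then 1 else 0.
(* standard basis: E k is E_{k+1} of the paper *)
Definition E (k : nat) : vec := fun i => kron i k.

Definition mmul (N : nat) (A B : mat) : mat :=
  fun i j => rsum N (fun l => A i l * B l j).
Definition mvec (N : nat) (A : mat) (v : vec) : vec :=
  fun i => rsum N (fun l => A i l * v l).
Definition tr (A : mat) : mat := fun i j => A j i.
Definition trace (N : nat) (A : mat) : R := rsum N (fun i => A i i).
Definition dot (N : nat) (u v : vec) : R := rsum N (fun i => u i * v i).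
Definition wedge (u v : vec) : mat := fun i j => u i * v j - v i * u j.

Definition skip (i r : nat) : nat := if Nat.ltb r i then r else S r.
Definition minor (A : mat) (i j : nat) : mat := fun r c => A (skip i r) (skip j c).
Fixpoint det (N : nat) (A : mat) : R :=
  match N with
  | O => 1
  | S M => rsum (S M) (fun j => (-1) ^ j * A 0%nat j * det M (minor A 0 j))
  end.
Definition minv (N : nat) (A : mat) : mat :=
  fun i j => (-1) ^ (i + j) * det (pred N) (minor A j i) / det N A.

Definition inSO (N : nat) (g : mat) : Prop :=
  (forall i j, (i < N)%nat -> (j < N)%nat -> mmul N (tr g) g i j = kron i j)
  /\ det N g = 1.

Definition II (N : nat) (J Om : mat) : mat :=
  fun i j => mmul N J Om i j + mmul N Om J i j.
Definition kappa (N : nat) (xi eta : mat) : R := - (1/2) * trace N (mmul N xi eta).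

Definition Xpos (N : nat) (Rr a : R) (s : vec) : vec :=
  fun i => if Nat.ltb i (N - 1) then s i
           else if Nat.eqb i (N - 1) then Rr + a else 0.
Definition Xdot (N : nat) (vs : vec) : vec :=
  fun i => if Nat.ltb i (N - 1) then vs i else 0.

(* Tangent vectors at q = (s, g) in the ambient coordinates (sdot, gdot),
   with body angular velocity Omega = g^{-1} gdot = g^T gdot. *)
Definition tvec := (vec * mat)%type.

(* kinetic energy metric <v,w>_q, L = 1/2 <qdot,qdot> *)
Definition metric (N : nat) (m Rr a : R) (J : mat) (s : vec) (g : mat)
  (v w : tvec) : R :=
  let Ov := mmul N (tr g) (snd v) in
  let Ow := mmul N (tr g) (snd w) in
  kappa N (II N J Ov) Ow
  + m * dot N (fun i => Xdot N (fst v) i + mvec N Ov (Xpos N Rr a s) i)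
              (fun i => Xdot N (fst w) i + mvec N Ow (Xpos N Rr a s) i).

(* vector fields on (an ambient neighbourhood of) Q *)
Definition field := vec -> mat -> tvec.

(* Horizontal lift of d/ds_i: Xdot = E_i, Omega = -(1/R) E_i /\ E_n,
   i.e. gdot = g Omega (extended to the ambient space by the same formula). *)
Definition Amat (N : nat) (Rr : R) (i : nat) : mat :=
  fun r c => - (1 / Rr) * wedge (E i) (E (N - 1)) r c.
Definition hor (N : nat) (Rr : R) (i : nat) : field :=
  fun s g => (E i, mmul N g (Amat N Rr i)).

Definition is_dirderiv (N : nat) (F : field) (s : vec) (g : mat) (v D : tvec) : Prop :=
  (forall r, (r < N - 1)%nat ->
     derivable_pt_lim
       (fun t => fst (F (fun x => s x + t * fst v x)
                        (fun x y => g x y + t * snd v x y)) r) 0 (fst D r))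
  /\ (forall r c, (r < N)%nat -> (c < N)%nat ->
     derivable_pt_lim
       (fun t => snd (F (fun x => s x + t * fst v x)
                        (fun x y => g x y + t * snd v x y)) r c) 0 (snd D r c)).

Definition is_bracket (N : nat) (Y Z : field) (s : vec) (g : mat) (B : tvec) : Prop :=
  exists D1 D2,
    is_dirderiv N Z s g (Y s g) D1 /\ is_dirderiv N Y s g (Z s g) D2 /\
    (forall r, (r < N - 1)%nat -> fst B r = fst D1 r - fst D2 r) /\
    (forall r c, (r < N)%nat -> (c < N)%nat -> snd B r c = snd D1 r c - snd D2 r c).

Definition Kmat (N : nat) (m Rr a : R) (J : mat) (s : vec) (g : mat) : mat :=
  fun k l => metric N m Rr a J s g (hor N Rr k s g) (hor N Rr l s g).

Definition gyro (N : nat) (m Rr a : R) (J : mat) (s : vec) (g : mat)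
  (B : tvec) (k : nat) : R :=
  rsum (N - 1) (fun l => minv (N - 1) (Kmat N m Rr a J s g) k l
                         * metric N m Rr a J s g B (hor N Rr l s g)).

Definition mat_sym (N : nat) (J : mat) : Prop :=
  forall i j, (i < N)%nat -> (j < N)%nat -> J i j = J j i.
Definition mat_posdef (N : nat) (J : mat) : Prop :=
  forall v : vec, (exists i, (i < N)%nat /\ v i <> 0) ->
    0 < rsum N (fun i => rsum N (fun j => v i * J i j * v j)).
Definition mat_diag (N : nat) (J : mat) : Prop :=
  forall i j, (i < N)%nat -> (j < N)%nat -> i <> j -> J i j = 0.

(* The horizontal lifts are hor_i(s,g) = (E_i, g A_i) with A_i = -(1/R) E_i /\ E_n
   independent of s, so [hor_i, hor_j] = (0, g [A_i, A_j]) with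
   [A_i, A_j] = R^-2 E_j /\ E_i.  The metric is left invariant, so all pairings can
   be computed in the body frame; for diagonal J this gives
   <[hor_i, hor_j], hor_l> = m a R^-3 (s_j d_il - s_i d_jl), which vanishes when
   a = 0.  When J_1 = ... = J_(n-1) the Gram matrix is
   K = R^-2 ((J_1 + J_n + m a^2) I + m s s^T), invertible by Sherman-Morrison, and
   the claimed C^k solve K C = <[hor_i, hor_j], hor_.> because the vector
   s_i e_j - s_j e_i is orthogonal to s. *)
From Stdlib Require Import Reals Lia Lra.
From HB Require structures.
From mathcomp Require all_boot all_algebra Rstruct.
Open Scope R_scope.

Lemma kron_refl x : kron x x = 1.
Proof. unfold kron; rewrite Nat.eqb_refl; reflexivity. Qed.

Lemma kron_neq x y : x <> y -> kron x y = 0.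
Proof. intro h; unfold kron; apply Nat.eqb_neq in h; rewrite h; reflexivity. Qed.

Lemma kron_sym x y : kron x y = kron y x.
Proof. unfold kron; rewrite Nat.eqb_sym; reflexivity. Qed.

Lemma rsum_ext N f g : (forall x, (x < N)%nat -> f x = g x) -> rsum N f = rsum N g.
Proof.
induction N; intros h; simpl; auto.
rewrite IHN, h; auto; intros; apply h; lia.
Qed.

Lemma rsum_plus N f g : rsum N (fun x => f x + g x) = rsum N f + rsum N g.
Proof. induction N; simpl; [ring|rewrite IHN; ring]. Qed.

Lemma rsum_minus N f g : rsum N (fun x => f x - g x) = rsum N f - rsum N g.
Proof. induction N; simpl; [ring|rewrite IHN; ring]. Qed.

Lemma rsum_scal N c f : rsum N (fun x => c * f x) = c * rsum N f.
Proof. induction N; simpl; [ring|rewrite IHN; ring]. Qed.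

Lemma rsum_zero N f : (forall x, (x < N)%nat -> f x = 0) -> rsum N f = 0.
Proof. induction N; intro h; simpl; [reflexivity|rewrite IHN, h; auto; ring]. Qed.

Lemma rsum_kron_l N x F : (x < N)%nat -> rsum N (fun p => kron p x * F p) = F x.
Proof.
induction N; intros h; [lia|simpl].
destruct (Nat.eq_dec x N) as [->|ne].
- rewrite rsum_zero; [rewrite kron_refl; ring|].
  intros y hy; rewrite kron_neq; [ring|lia].
- rewrite IHN by lia; rewrite kron_neq by lia; ring.
Qed.

Lemma rsum_kron_r N x F : (x < N)%nat -> rsum N (fun p => kron x p * F p) = F x.
Proof.
intro h; rewrite <- (rsum_kron_l N x F h); apply rsum_ext; intros; rewrite kron_sym; auto.
Qed.

Lemma rsum_kron2 N x y F G : (x < N)%nat -> (y < N)%nat ->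
  rsum N (fun p => kron p x * F p + kron p y * G p) = F x + G y.
Proof. intros; rewrite rsum_plus, !rsum_kron_l; auto. Qed.

Lemma rsum_swap N M f :
  rsum N (fun a => rsum M (fun b => f a b)) = rsum M (fun b => rsum N (fun a => f a b)).
Proof.
induction N; simpl.
- symmetry; apply rsum_zero; auto.
- rewrite IHN, <- rsum_plus; auto.
Qed.

Lemma rsum_sqr_ge0 N f : 0 <= rsum N (fun p => f p * f p).
Proof. induction N; simpl; [lra|]. pose proof (Rle_0_sqr (f N)); unfold Rsqr in *; lra. Qed.

Lemma derivable_pt_lim_rsum_affine N a b c x :
  derivable_pt_lim (fun t => rsum N (fun l => (a l + t * b l) * c l)) x
    (rsum N (fun l => b l * c l)).
Proof.
set (c0 := rsum N (fun l => a l * c l)); set (c1 := rsum N (fun l => b l * c l)).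
apply (derivable_pt_lim_ext (fun t => c0 + c1 * t)).
- intro t; unfold c0, c1; rewrite Rmult_comm, <- rsum_scal, <- rsum_plus; apply rsum_ext; intros; ring.
- pose proof (derivable_pt_lim_plus (fun _ => c0) (mult_real_fct c1 id) x 0 (c1 * 1)
    (derivable_pt_lim_const c0 x) (derivable_pt_lim_scal id c1 x 1 (derivable_pt_lim_id x)))
    as H.
  rewrite Rplus_0_l, Rmult_1_r in H; exact H.
Qed.

Lemma det_S N A :
  det (S N) A = rsum (S N) (fun j => (-1) ^ j * A 0%nat j * det N (minor A 0 j)).
Proof. reflexivity. Qed.

(* [det] and [minv] agree with MathComp's [\det] and [\adj], whose theory supplies
   the identity adj(A) A = det(A) I. *)
Module AdjugateCramer.
Import HB.structures all_boot all_algebra Rstruct GRing.Theory.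
Local Open Scope ring_scope.

Definition mx_of N (A : mat) : 'M[R]_N := \matrix_(i < N, j < N) A i j.

Lemma rsum_big N (f : nat -> R) : rsum N f = \sum_(i < N) f i.
Proof.
elim: N => [|N IH]; first by rewrite big_ord0.
by rewrite big_ord_recr /= IH.
Qed.

Lemma powE (x : R) (k : nat) : pow x k = x ^+ k.
Proof. by elim: k => [|k IH] //=; rewrite exprS IH. Qed.

Lemma skip_bump i r : skip i r = bump i r.
Proof.
rewrite /skip /bump; case: ltnP => h /=.
  by move/ltP/Nat.ltb_lt: h => ->.
by move/leP/Nat.ltb_ge: h => ->.
Qed.

Lemma minor_mx_of N (A : mat) (i j : 'I_N.+1) :
  mx_of N (minor A i j) = row' i (col' j (mx_of N.+1 A)).
Proof. by apply/matrixP => r c; rewrite !mxE /minor !skip_bump. Qed.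

Lemma det_mx_of N (A : mat) : det N A = \det (mx_of N A).
Proof.
elim: N A => [|N IH] A; first by rewrite det_mx00.
rewrite det_S rsum_big (expand_det_row _ ord0); apply: eq_bigr => j _.
rewrite IH /cofactor mxE add0n powE (minor_mx_of _ _ ord0).
by rewrite !RmultE [_ * A _ _]mulrC -mulrA.
Qed.

Lemma minv_mul_cancel N (A : mat) (u : vec) k : (k < N)%coq_nat -> det N A <> 0 ->
  rsum N (fun l => minv N A k l * rsum N (fun p => A l p * u p)) = u k.
Proof.
case: N => [|N] /ltP hk hd; first by [].
set M := mx_of N.+1 A; set uv := \col_(p < N.+1) u p.
have Au (l : 'I_N.+1) : rsum N.+1 (fun p => A l p * u p) = (M *m uv) l ord0.
  by rewrite rsum_big mxE; apply: eq_bigr => p _; rewrite !mxE.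
have minvE (l : 'I_N.+1) :
    minv N.+1 A k l = ((\det M)^-1 *: \adj M) (Ordinal hk) l.
  rewrite !mxE /minv; change (Init.Nat.pred N.+1) with N.
  rewrite !det_mx_of -/M (minor_mx_of _ _ l (Ordinal hk)).
  by rewrite /cofactor powE addnC RmultE RdivE mulrC.
rewrite rsum_big.
transitivity ((((\det M)^-1 *: \adj M) *m (M *m uv)) (Ordinal hk) ord0).
  by rewrite mxE; apply: eq_bigr => l _; rewrite Au minvE.
rewrite mulmxA -scalemxAl mul_adj_mx scale_scalar_mx mul_scalar_mx mulVf.
  by rewrite scale1r mxE.
by rewrite -det_mx_of; apply/eqP.
Qed.

Lemma kronE (x y : nat) : kron x y = (x == y)%:R.
Proof.
rewrite /kron; case: (Nat.eqb_spec x y) => [->|ne]; first by rewrite eqxx.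
by have /eqP/negbTE -> : x <> y by [].
Qed.

Lemma det_neq0_of_rinv N (A B : mat) :
  (forall a b, (a < N)%coq_nat -> (b < N)%coq_nat ->
     rsum N (fun p => A a p * B p b) = kron a b) ->
  det N A <> 0.
Proof.
move=> hAB; rewrite det_mx_of => h0.
have e : mx_of N A *m mx_of N B = 1%:M.
  apply/matrixP => a b; rewrite !mxE -val_eqE /= -kronE.
  rewrite -(hAB a b (ltP (ltn_ord a)) (ltP (ltn_ord b))) rsum_big.
  by apply: eq_bigr => p _; rewrite !mxE.
have := det_mulmx (mx_of N A) (mx_of N B); rewrite e det1 h0 mul0r => /eqP.
by rewrite oner_eq0.
Qed.
End AdjugateCramer.

Lemma mmul_assoc N A B C r c : mmul N A (mmul N B C) r c = mmul N (mmul N A B) C r c.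
Proof.
unfold mmul.
rewrite (rsum_ext N _ (fun l => rsum N (fun p => A r l * (B l p * C p c))))
  by (intros; rewrite rsum_scal; auto).
rewrite rsum_swap; apply rsum_ext; intros p _.
rewrite Rmult_comm, <- rsum_scal; apply rsum_ext; intros; ring.
Qed.

Lemma mmul_tr_SO N g O r c : inSO N g -> (r < N)%nat -> (c < N)%nat ->
  mmul N (tr g) (mmul N g O) r c = O r c.
Proof.
intros [hg _] hr hc; rewrite mmul_assoc.
transitivity (rsum N (fun p => mmul N (tr g) g r p * O p c)); [reflexivity|].
rewrite <- (rsum_kron_r N r (fun p => O p c) hr).
apply rsum_ext; intros; rewrite hg; auto.
Qed.

Definition cm_vel N Rr a (s v : vec) (O : mat) : vec :=
  fun p => Xdot N v p + mvec N O (Xpos N Rr a s) p.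

Lemma kappa_ext N J O1 O2 P1 P2 :
  (forall r c, (r < N)%nat -> (c < N)%nat -> O1 r c = P1 r c) ->
  (forall r c, (r < N)%nat -> (c < N)%nat -> O2 r c = P2 r c) ->
  kappa N (II N J O1) O2 = kappa N (II N J P1) P2.
Proof.
intros h1 h2; unfold kappa, trace, mmul, II; f_equal.
apply rsum_ext; intros x hx; apply rsum_ext; intros y hy.
rewrite (h2 y x) by auto.
f_equal; f_equal; apply rsum_ext; intros z hz; rewrite h1; auto.
Qed.

Lemma metric_left_inv N m Rr a J s g v w O1 O2 : inSO N g ->
  metric N m Rr a J s g (v, mmul N g O1) (w, mmul N g O2)
  = kappa N (II N J O1) O2 + m * dot N (cm_vel N Rr a s v O1) (cm_vel N Rr a s w O2).
Proof.
intro hg; unfold metric; cbn [fst snd]; f_equal.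
- apply kappa_ext; intros; apply mmul_tr_SO; auto.
- f_equal; unfold dot; apply rsum_ext; intros p hp; unfold cm_vel, mvec.
  f_equal; f_equal; apply rsum_ext; intros; rewrite mmul_tr_SO; auto.
Qed.

Lemma kappa_diag N J O1 O2 : mat_diag N J ->
  kappa N (II N J O1) O2
  = -(1/2) * rsum N (fun a => rsum N (fun b => (J a a + J b b) * O1 a b * O2 b a)).
Proof.
intro hd; unfold kappa, trace; f_equal.
apply rsum_ext; intros a ha; apply rsum_ext; intros b hb; unfold II, mmul.
assert (JO : rsum N (fun l => J a l * O1 l b) = J a a * O1 a b).
{ rewrite <- (rsum_kron_r N a (fun l => J a l * O1 l b)) by auto.
  apply rsum_ext; intros l hl; destruct (Nat.eq_dec a l).
  - subst; rewrite kron_refl; ring.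
  - rewrite kron_neq, hd; auto; ring. }
assert (OJ : rsum N (fun l => O1 a l * J l b) = O1 a b * J b b).
{ rewrite <- (rsum_kron_r N b (fun l => O1 a l * J l b)) by auto.
  apply rsum_ext; intros l hl; destruct (Nat.eq_dec b l).
  - subst; rewrite kron_refl; ring.
  - rewrite kron_neq, (hd l b); auto; ring. }
rewrite JO, OJ; ring.
Qed.

Lemma AmatE N Rr k r c :
  Amat N Rr k r c = -(1/Rr) * (kron r k * kron c (N-1) - kron r (N-1) * kron c k).
Proof. reflexivity. Qed.

Lemma rsum_Amat N Rr i r Y : (i < N)%nat -> (1 <= N)%nat ->
  rsum N (fun p => Amat N Rr i r p * Y p)
  = -(1/Rr) * kron r i * Y (N-1)%nat + (1/Rr) * kron r (N-1) * Y i.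
Proof.
intros hi hN.
rewrite (rsum_ext N _ (fun p => kron p (N-1) * (-(1/Rr) * kron r i * Y p)
                                + kron p i * ((1/Rr) * kron r (N-1) * Y p)))
  by (intros; rewrite AmatE; ring).
apply rsum_kron2; lia.
Qed.

Definition Acomm (Rr : R) (i j : nat) : mat :=
  fun r c => 1/(Rr*Rr) * wedge (E j) (E i) r c.

Lemma rsum_Acomm N Rr i j r Y : (i < N)%nat -> (j < N)%nat ->
  rsum N (fun q => Acomm Rr i j r q * Y q) = 1/(Rr*Rr) * (kron r j * Y i - kron r i * Y j).
Proof.
intros hi hj.
rewrite (rsum_ext N _ (fun q => kron q i * (1/(Rr*Rr) * kron r j * Y q)
                                + kron q j * (-(1/(Rr*Rr)) * kron r i * Y q)))
  by (intros; unfold Acomm, wedge, E; ring).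
rewrite rsum_kron2 by lia; ring.
Qed.

Lemma Amat_mul N Rr i j r c : (i < N - 1)%nat -> (j < N - 1)%nat -> Rr <> 0 ->
  mmul N (Amat N Rr i) (Amat N Rr j) r c
  = -(1/(Rr*Rr)) * (kron r i * kron c j + kron r (N-1) * kron i j * kron c (N-1)).
Proof.
intros hi hj hR; unfold mmul; rewrite rsum_Amat by lia.
rewrite !AmatE, (kron_neq (N-1) j), (kron_neq i (N-1)), kron_refl by lia.
field; auto.
Qed.

Lemma Amat_commutator N Rr i j r c : (i < N - 1)%nat -> (j < N - 1)%nat -> Rr <> 0 ->
  mmul N (Amat N Rr i) (Amat N Rr j) r c - mmul N (Amat N Rr j) (Amat N Rr i) r c
  = Acomm Rr i j r c.
Proof.
intros hi hj hR; rewrite !Amat_mul by auto; rewrite (kron_sym j i).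
unfold Acomm, wedge, E; ring.
Qed.

Lemma is_dirderiv_hor N Rr s g i j :
  is_dirderiv N (hor N Rr j) s g (hor N Rr i s g)
    ((fun _ => 0), mmul N (mmul N g (Amat N Rr i)) (Amat N Rr j)).
Proof.
split.
- intros r _; apply derivable_pt_lim_const.
- intros r c _ _; apply derivable_pt_lim_rsum_affine.
Qed.

Lemma is_bracket_hor N Rr s g i j : Rr <> 0 -> (i < N - 1)%nat -> (j < N - 1)%nat ->
  is_bracket N (hor N Rr i) (hor N Rr j) s g ((fun _ => 0), mmul N g (Acomm Rr i j)).
Proof.
intros hR hi hj.
exists ((fun _ => 0), mmul N (mmul N g (Amat N Rr i)) (Amat N Rr j)),
       ((fun _ => 0), mmul N (mmul N g (Amat N Rr j)) (Amat N Rr i)).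
split; [apply is_dirderiv_hor|split; [apply is_dirderiv_hor|split]].
- intros; cbn; ring.
- intros r c _ _; cbn [fst snd]; rewrite <- !mmul_assoc.
  unfold mmul at 1 2 4; rewrite <- rsum_minus.
  apply rsum_ext; intros l _.
  rewrite <- Rmult_minus_distr_l, Amat_commutator; auto.
Qed.

Lemma Xpos_lt N Rr a s p : (p < N - 1)%nat -> Xpos N Rr a s p = s p.
Proof. intro h; unfold Xpos; apply Nat.ltb_lt in h; rewrite h; auto. Qed.

Lemma Xpos_last N Rr a s : Xpos N Rr a s (N-1)%nat = Rr + a.
Proof. unfold Xpos; rewrite Nat.ltb_irrefl, Nat.eqb_refl; auto. Qed.

Lemma cm_vel_hor N Rr a s k p : (k < N - 1)%nat -> Rr <> 0 ->
  cm_vel N Rr a s (E k) (Amat N Rr k) p = -(a/Rr) * kron p k + s k / Rr * kron p (N-1).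
Proof.
intros hk hR; unfold cm_vel, mvec.
rewrite rsum_Amat, Xpos_last, Xpos_lt by lia.
assert (Xdot N (E k) p = kron p k) as ->.
{ unfold Xdot, E; destruct (p <? N - 1) eqn:e; auto.
  apply Nat.ltb_ge in e; rewrite kron_neq; auto; lia. }
field; auto.
Qed.

Lemma cm_vel_Acomm N Rr a s i j p : (i < N - 1)%nat -> (j < N - 1)%nat ->
  cm_vel N Rr a s (fun _ => 0) (Acomm Rr i j) p = 1/(Rr*Rr) * (kron p j * s i - kron p i * s j).
Proof.
intros hi hj; unfold cm_vel, mvec.
rewrite rsum_Acomm, !Xpos_lt by lia.
assert (Xdot N (fun _ => 0) p = 0) as -> by (unfold Xdot; destruct (p <? N - 1); auto).
ring.
Qed.

Lemma metric_bracket_hor N m Rr a J s g i j l :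
  (3 <= N)%nat -> inSO N g -> mat_diag N J -> Rr <> 0 ->
  (i < N - 1)%nat -> (j < N - 1)%nat -> (l < N - 1)%nat ->
  metric N m Rr a J s g ((fun _ => 0), mmul N g (Acomm Rr i j)) (hor N Rr l s g)
  = m * a / (Rr*Rr*Rr) * (s j * kron i l - s i * kron j l).
Proof.
intros hN hg hd hR hi hj hl; unfold hor; rewrite metric_left_inv, kappa_diag by auto.
(* [Acomm] lives on the first n-1 coordinates, [Amat] only couples them with the last *)
rewrite (rsum_zero N (fun x => rsum N _)).
2:{ intros x hx; apply rsum_zero; intros y hy; unfold Acomm, wedge, E; rewrite AmatE.
    destruct (Nat.eq_dec x (N-1)).
    - subst; rewrite (kron_neq (N-1) j), (kron_neq (N-1) i) by lia; ring.
    - rewrite (kron_neq x (N-1)) by auto; destruct (Nat.eq_dec y (N-1)).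
      + subst; rewrite (kron_neq (N-1) j), (kron_neq (N-1) i) by lia; ring.
      + rewrite (kron_neq y (N-1)) by auto; ring. }
unfold dot.
rewrite (rsum_ext N _ (fun p =>
    kron p j * (1/(Rr*Rr) * s i * (-(a/Rr) * kron p l + s l / Rr * kron p (N-1)))
  + kron p i * (-(1/(Rr*Rr)) * s j * (-(a/Rr) * kron p l + s l / Rr * kron p (N-1))))).
2:{ intros p hp; rewrite cm_vel_Acomm, cm_vel_hor by auto; ring. }
rewrite rsum_kron2, (kron_neq j (N-1)), (kron_neq i (N-1)) by lia.
field; auto.
Qed.

Lemma metric_hor_hor N m Rr a J s g k l :
  (3 <= N)%nat -> inSO N g -> mat_diag N J -> Rr <> 0 ->
  (k < N - 1)%nat -> (l < N - 1)%nat ->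
  metric N m Rr a J s g (hor N Rr k s g) (hor N Rr l s g)
  = ((J k k + J (N-1)%nat (N-1)%nat + m * a^2) * kron k l + m * s k * s l) / (Rr*Rr).
Proof.
intros hN hg hd hR hk hl; unfold hor; rewrite metric_left_inv, kappa_diag by auto.
rewrite (rsum_ext N _ (fun x =>
    kron x k * (-(1/(Rr*Rr)) * (J x x + J (N-1)%nat (N-1)%nat) * kron x l)
  + kron x (N-1) * (-(1/(Rr*Rr)) * (J x x + J k k) * kron x (N-1) * kron k l))).
2:{ intros x hx.
    rewrite (rsum_ext N _ (fun b => Amat N Rr k x b * ((J x x + J b b) * Amat N Rr l b x)))
      by (intros; ring).
    rewrite rsum_Amat, !AmatE, (kron_neq (N-1) l), kron_refl, (kron_neq k (N-1)) by lia.
    field; auto. }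
rewrite rsum_kron2, kron_refl by lia.
unfold dot.
rewrite (rsum_ext N _ (fun p =>
    kron p k * (-(a/Rr) * (-(a/Rr) * kron p l + s l / Rr * kron p (N-1)))
  + kron p (N-1) * (s k / Rr * (-(a/Rr) * kron p l + s l / Rr * kron p (N-1))))).
2:{ intros p hp; rewrite !cm_vel_hor by auto; ring. }
rewrite rsum_kron2, (kron_neq k (N-1)), (kron_neq (N-1) l), kron_refl by lia.
field; auto.
Qed.

Definition gram_rank1 (c m Rr : R) (s : vec) : mat :=
  fun l p => (c * kron l p + m * s l * s p) / (Rr*Rr).

(* Sherman-Morrison inverse of [gram_rank1] *)
Definition gram_rank1_inv (M : nat) (c m Rr : R) (s : vec) : mat :=
  fun p b => Rr*Rr / c * (kron p b - m * s p * s b / (c + m * rsum M (fun q => s q * s q))).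

Lemma gram_rank1_mul_inv M c m Rr s a b : c <> 0 -> Rr <> 0 ->
  c + m * rsum M (fun q => s q * s q) <> 0 -> (a < M)%nat -> (b < M)%nat ->
  rsum M (fun p => gram_rank1 c m Rr s a p * gram_rank1_inv M c m Rr s p b) = kron a b.
Proof.
intros hc hR hd ha hb; unfold gram_rank1_inv.
set (d := c + m * rsum M (fun q => s q * s q)) in *.
rewrite (rsum_ext M _ (fun p =>
    (kron a p * (kron p b - m * s p * s b / d) + kron b p * (m * s a * s p / c))
  + (- (m*m * s a * s b) / (c*d)) * (s p * s p))).
2:{ intros p hp; unfold gram_rank1; rewrite (kron_sym p b); field; auto. }
rewrite !rsum_plus, !rsum_kron_r, rsum_scal by auto.
unfold d; field; auto.
Qed.

Lemma gram_rank1_mul_perp M c m Rr s i j l : (i < M)%nat -> (j < M)%nat ->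
  rsum M (fun p => gram_rank1 c m Rr s l p * (s i * kron j p - s j * kron i p))
  = c / (Rr*Rr) * (s i * kron j l - s j * kron i l).
Proof.
intros hi hj; unfold gram_rank1.
rewrite (rsum_ext M _ (fun p => kron j p * ((c * kron l p + m * s l * s p) / (Rr*Rr) * s i)
                              + kron i p * (- ((c * kron l p + m * s l * s p) / (Rr*Rr) * s j))))
  by (intros; ring).
rewrite rsum_plus, !rsum_kron_r by auto.
rewrite (kron_sym l j), (kron_sym l i); unfold Rdiv; ring.
Qed.

Lemma Kmat_gram_rank1 N m Rr a J s g l p :
  (3 <= N)%nat -> inSO N g -> mat_diag N J -> Rr <> 0 ->
  (forall i, (i < N - 1)%nat -> J i i = J 0%nat 0%nat) ->
  (l < N - 1)%nat -> (p < N - 1)%nat ->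
  Kmat N m Rr a J s g l p
  = gram_rank1 (J 0%nat 0%nat + J (N-1)%nat (N-1)%nat + m * a^2) m Rr s l p.
Proof.
intros hN hg hd hR hJ hl hp; unfold Kmat.
rewrite metric_hor_hor, hJ by auto; reflexivity.
Qed.

Lemma posdef_diag_pos N J x : mat_posdef N J -> (x < N)%nat -> 0 < J x x.
Proof.
intros hJ hx.
assert (H : 0 < rsum N (fun i => rsum N (fun j => kron i x * J i j * kron j x))).
{ apply hJ; exists x; split; auto; rewrite kron_refl; lra. }
rewrite (rsum_ext N _ (fun i => kron i x * J i x)), rsum_kron_l in H; auto.
intros i hi.
rewrite (rsum_ext N _ (fun j => kron j x * (kron i x * J i j))) by (intros; ring).
apply rsum_kron_l; auto.
Qed.

Lemma gram_rank1_coef_pos N J m a : (1 <= N)%nat -> 0 <= m -> mat_posdef N J ->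
  0 < J 0%nat 0%nat + J (N-1)%nat (N-1)%nat + m * a^2.
Proof.
intros hN hm hpd.
pose proof (posdef_diag_pos N J 0 hpd ltac:(lia)).
pose proof (posdef_diag_pos N J (N-1) hpd ltac:(lia)).
pose proof (pow2_ge_0 a); nra.
Qed.

Lemma det_Kmat_neq0 N m Rr a J s g :
  (3 <= N)%nat -> 0 < Rr -> 0 < m -> inSO N g -> mat_posdef N J -> mat_diag N J ->
  (forall i, (i < N - 1)%nat -> J i i = J 0%nat 0%nat) ->
  det (N-1) (Kmat N m Rr a J s g) <> 0.
Proof.
intros hN hR hm hg hpd hd hJ.
set (c := J 0%nat 0%nat + J (N-1)%nat (N-1)%nat + m * a^2).
assert (hc : 0 < c) by (apply gram_rank1_coef_pos; [lia|lra|auto]).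
assert (hS := rsum_sqr_ge0 (N-1) s).
apply (AdjugateCramer.det_neq0_of_rinv (N-1) _ (gram_rank1_inv (N-1) c m Rr s)).
intros k l hk hl.
rewrite <- (gram_rank1_mul_inv (N-1) c m Rr s k l) by (auto; nra).
apply rsum_ext; intros p hp; unfold c; rewrite Kmat_gram_rank1 by (auto; lra); reflexivity.
Qed.

Lemma gyro_solve N m Rr a J s g B u k : (k < N - 1)%nat ->
  det (N-1) (Kmat N m Rr a J s g) <> 0 ->
  (forall l, (l < N - 1)%nat ->
     metric N m Rr a J s g B (hor N Rr l s g)
     = rsum (N-1) (fun p => Kmat N m Rr a J s g l p * u p)) ->
  gyro N m Rr a J s g B k = u k.
Proof.
intros hk hdet hKu; unfold gyro.
rewrite (rsum_ext (N-1) _ (fun l => minv (N-1) (Kmat N m Rr a J s g) k l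
                                    * rsum (N-1) (fun p => Kmat N m Rr a J s g l p * u p)))
  by (intros l hl; rewrite hKu; auto).
apply AdjugateCramer.minv_mul_cancel; auto.
Qed.

Theorem mainTheorem5 (n : nat) (Rr a m : R) (J : mat) :
  (3 <= n)%nat -> 0 < Rr -> 0 < m -> mat_sym n J -> mat_posdef n J ->
  ((mat_diag n J -> a = 0 ->
    forall (s : vec) (g : mat), inSO n g ->
    forall i j k : nat, (i < n - 1)%nat -> (j < n - 1)%nat -> (k < n - 1)%nat ->
    exists B : tvec, is_bracket n (hor n Rr i) (hor n Rr j) s g B /\
      gyro n m Rr a J s g B k = 0)
  /\
   (mat_diag n J -> (forall i, (i < n - 1)%nat -> J i i = J 0%nat 0%nat) ->
    forall (s : vec) (g : mat), inSO n g ->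
    forall i j k : nat, (i < n - 1)%nat -> (j < n - 1)%nat -> (k < n - 1)%nat ->
    exists B : tvec, is_bracket n (hor n Rr i) (hor n Rr j) s g B /\
      gyro n m Rr a J s g B k =
        (- (m * a)) / (Rr * (J 0%nat 0%nat + J (n - 1)%nat (n - 1)%nat + m * a ^ 2))
        * (s i * kron j k - s j * kron i k))).
Proof.
intros hn hR hm _ hpd; assert (hR0 : Rr <> 0) by lra.
split.
- intros hd -> s g hg i j k hi hj hk.
  exists ((fun _ => 0), mmul n g (Acomm Rr i j)); split; [apply is_bracket_hor; auto|].
  apply rsum_zero; intros l hl.
  rewrite metric_bracket_hor by auto; unfold Rdiv; ring.
- intros hd hJ s g hg i j k hi hj hk.
  exists ((fun _ => 0), mmul n g (Acomm Rr i j)); split; [apply is_bracket_hor; auto|].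
  set (c := J 0%nat 0%nat + J (n - 1)%nat (n - 1)%nat + m * a ^ 2).
  assert (hc : 0 < c) by (apply gram_rank1_coef_pos; [lia|lra|auto]).
  apply (gyro_solve n m Rr a J s g _ (fun p => - (m * a) / (Rr * c) * (s i * kron j p - s j * kron i p)));
    [auto | apply det_Kmat_neq0; auto |].
  intros l hl.
  rewrite (rsum_ext (n-1) _ (fun p => - (m * a) / (Rr * c) *
             (gram_rank1 c m Rr s l p * (s i * kron j p - s j * kron i p))))
    by (intros p hp; rewrite Kmat_gram_rank1 by auto; fold c; ring).
  rewrite rsum_scal, gram_rank1_mul_perp, metric_bracket_hor by auto.
  field; lra.
Qed.
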